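(* Let $P$ be a separable normed space which is topologically projective in $\mathbf{Nor}$. Then $P$ has at most countable (Hamel) linear dimension.
   Context: An operator $\tau:F\to E$ is coisometric if $\|\tau\|\le1$ and for each $x\in E$, $\varepsilon>0$ there is $y\in F$ with $\tau(y)=x$, $\|y\|<\|x\|+\varepsilon$. A normed space $P$ is topologically projective in $\mathbf{Nor}$ if for every coisometric operator $\tau:F\to E$ between normed spaces and every bounded operator $\varphi:P\to E$ there is a bounded operator $\psi:P\to F$ with $\tau\psi=\varphi$. *)

From Stdlib Require Import Reals List.
Open Scope R_scope.

Record NormedSpace : Type := {
  ns_car :> Type;
  ns_zero : ns_car;
  ns_add : ns_car -> ns_car -> ns_car;
  ns_opp : ns_car -> ns_car;
  ns_scal : R -> ns_car -> ns_car;
  ns_norm : ns_car -> R;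
  ns_addA : forall x y z, ns_add x (ns_add y z) = ns_add (ns_add x y) z;
  ns_addC : forall x y, ns_add x y = ns_add y x;
  ns_add0 : forall x, ns_add ns_zero x = x;
  ns_addN : forall x, ns_add x (ns_opp x) = ns_zero;
  ns_scal1 : forall x, ns_scal 1 x = x;
  ns_scalA : forall a b x, ns_scal a (ns_scal b x) = ns_scal (a * b) x;
  ns_scalDr : forall a x y, ns_scal a (ns_add x y) = ns_add (ns_scal a x) (ns_scal a y);
  ns_scalDl : forall a b x, ns_scal (a + b) x = ns_add (ns_scal a x) (ns_scal b x);
  ns_norm_eq0 : forall x, ns_norm x = 0 -> x = ns_zero;
  ns_normZ : forall a x, ns_norm (ns_scal a x) = Rabs a * ns_norm x;
  ns_normD : forall x y, ns_norm (ns_add x y) <= ns_norm x + ns_norm y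
}.

Arguments ns_zero {_}.
Arguments ns_add {_}.
Arguments ns_opp {_}.
Arguments ns_scal {_}.
Arguments ns_norm {_}.

Definition ns_sub {X : NormedSpace} (x y : X) : X := ns_add x (ns_opp y).

Definition linear_map {X Y : NormedSpace} (T : X -> Y) : Prop :=
  (forall x y, T (ns_add x y) = ns_add (T x) (T y)) /\
  (forall (a : R) x, T (ns_scal a x) = ns_scal a (T x)).

Definition bounded_operator {X Y : NormedSpace} (T : X -> Y) : Prop :=
  linear_map T /\ exists C : R, forall x, ns_norm (T x) <= C * ns_norm x.

Definition norm_le_one {X Y : NormedSpace} (T : X -> Y) : Prop :=
  forall x, ns_norm (T x) <= ns_norm x.

Definition coisometric {F E : NormedSpace} (tau : F -> E) : Prop :=
  bounded_operator tau /\ norm_le_one tau /\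
  forall (x : E) (eps : R), 0 < eps ->
    exists y : F, tau y = x /\ ns_norm y < ns_norm x + eps.

Definition topologically_projective (P : NormedSpace) : Prop :=
  forall (F E : NormedSpace) (tau : F -> E) (phi : P -> E),
    coisometric tau -> bounded_operator phi ->
    exists psi : P -> F, bounded_operator psi /\ forall x, tau (psi x) = phi x.

(** Separability: a countable dense subset (given as a sequence; a normed
    space is nonempty since it contains 0). *)
Definition separable (X : NormedSpace) : Prop :=
  exists d : nat -> X, forall (x : X) (eps : R), 0 < eps ->
    exists n, ns_norm (ns_sub x (d n)) < eps.

Definition lin_comb {X : NormedSpace} (l : list (R * X)) : X :=
  fold_right (fun p acc => ns_add (ns_scal (fst p) (snd p)) acc) ns_zero l.

Definition lin_independent {X : NormedSpace} (B : X -> Prop) : Prop :=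
  forall l : list (R * X),
    NoDup (map snd l) -> Forall (fun p => B (snd p)) l ->
    lin_comb l = ns_zero -> Forall (fun p => fst p = 0) l.

Definition lin_spanning {X : NormedSpace} (B : X -> Prop) : Prop :=
  forall x : X, exists l : list (R * X),
    Forall (fun p => B (snd p)) l /\ lin_comb l = x.

Definition hamel_basis {X : NormedSpace} (B : X -> Prop) : Prop :=
  lin_independent B /\ lin_spanning B.

Definition at_most_countable {X : Type} (B : X -> Prop) : Prop :=
  exists f : X -> nat, forall x y, B x -> B y -> f x = f y -> x = y.

Definition countable_hamel_dim (X : NormedSpace) : Prop :=
  exists B : X -> Prop, hamel_basis B /\ at_most_countable B.

From Stdlib Require Import Reals List Permutation Lra Lia ClassicalEpsilon
  FunctionalExtensionality ProofIrrelevance Cantor.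
Open Scope R_scope.

(* Let l1^0(P) be the space of finitely supported functions f on the
   points of P with norm sum_x |f(x)| (||x|| + 1).  The summation map
   f |-> sum_x f(x) x is coisometric onto P (x is the image of c times the
   indicator of x / c, of norm ||x|| + c), so projectivity lifts the identity
   of P to a bounded operator psi with sum_map (psi x) = x.  Coordinates are
   bounded functionals on l1^0(P); hence, for a dense sequence (d n), every
   point of the support of psi x lies in the support of some psi (d n).  These
   countably many finite supports form a sequence spanning P, and a greedy
   selection from a spanning sequence is a countable Hamel basis. *)

Local Notation dec P := (excluded_middle_informative P).
Section VectorAlgebra.
Context {X : NormedSpace}.

Lemma ns_add0r (x : X) : ns_add x ns_zero = x.
Proof. rewrite ns_addC; apply ns_add0. Qed.

Lemma ns_scal0l (x : X) : ns_scal 0 x = ns_zero.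
Proof.
  assert (Hdouble : ns_scal 0 x = ns_add (ns_scal 0 x) (ns_scal 0 x)).
  { rewrite <- ns_scalDl. f_equal. ring. }
  pose proof (ns_addN X (ns_scal 0 x)) as H.
  rewrite Hdouble in H at 1. rewrite <- ns_addA, ns_addN, ns_add0r in H. exact H.
Qed.

Lemma ns_scal0r (a : R) : ns_scal a (@ns_zero X) = ns_zero.
Proof.
  rewrite <- (ns_scal0l ns_zero) at 1. rewrite ns_scalA, Rmult_0_r. apply ns_scal0l.
Qed.

Lemma ns_opp_scal (x : X) : ns_opp x = ns_scal (-1) x.
Proof.
  assert (H : ns_add (ns_scal (-1) x) x = ns_zero).
  { rewrite <- (ns_scal1 X x) at 2. rewrite <- ns_scalDl.
    replace (-1 + 1) with 0 by ring. apply ns_scal0l. }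
  rewrite <- (ns_add0 X (ns_opp x)), <- H, <- ns_addA, ns_addN. apply ns_add0r.
Qed.

Lemma ns_add_eq0 (a b : X) : ns_add a b = ns_zero -> a = ns_opp b.
Proof.
  intros H. rewrite <- (ns_add0r a), <- (ns_addN X b), ns_addA, H. apply ns_add0.
Qed.

Lemma ns_norm0 : ns_norm (@ns_zero X) = 0.
Proof. rewrite <- (ns_scal0l ns_zero), ns_normZ, Rabs_R0. ring. Qed.

(* Norms are nonnegative: 0 = ||x - x|| <= 2 ||x||. *)
Lemma ns_norm_ge0 (x : X) : 0 <= ns_norm x.
Proof.
  pose proof (ns_normD X x (ns_opp x)) as H.
  rewrite ns_addN, ns_norm0, ns_opp_scal, ns_normZ in H.
  replace (Rabs (-1)) with 1 in H by (rewrite Rabs_left; lra). lra.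
Qed.

End VectorAlgebra.

Section Spans.
Context {X : NormedSpace}.

Definition inspan (S : X -> Prop) (x : X) : Prop :=
  exists l : list (R * X), Forall (fun p => S (snd p)) l /\ lin_comb l = x.

Lemma lin_comb_app (l1 l2 : list (R * X)) :
  lin_comb (l1 ++ l2) = ns_add (lin_comb l1) (lin_comb l2).
Proof.
  induction l1 as [|p l1 IH]; simpl.
  - symmetry; apply ns_add0.
  - unfold lin_comb in *; simpl. rewrite IH, ns_addA. reflexivity.
Qed.

Lemma lin_comb_scale (a : R) (l : list (R * X)) :
  lin_comb (map (fun p => (a * fst p, snd p)) l) = ns_scal a (lin_comb l).
Proof.
  induction l as [|p l IH]; simpl.
  - symmetry; apply ns_scal0r.
  - unfold lin_comb in *; simpl. rewrite IH, ns_scalDr, ns_scalA. reflexivity.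
Qed.

Lemma inspan_0 (S : X -> Prop) : inspan S ns_zero.
Proof. exists nil. split; [constructor | reflexivity]. Qed.

Lemma inspan_add (S : X -> Prop) x y :
  inspan S x -> inspan S y -> inspan S (ns_add x y).
Proof.
  intros [l1 [H1 E1]] [l2 [H2 E2]]. exists (l1 ++ l2). split.
  - apply Forall_app; auto.
  - rewrite lin_comb_app, E1, E2; reflexivity.
Qed.

Lemma inspan_scal (S : X -> Prop) a x : inspan S x -> inspan S (ns_scal a x).
Proof.
  intros [l [H E]]. exists (map (fun p => (a * fst p, snd p)) l). split.
  - rewrite Forall_map. exact H.
  - rewrite lin_comb_scale, E; reflexivity.
Qed.

Lemma inspan_single (S : X -> Prop) x : S x -> inspan S x.
Proof.
  intros H. exists ((1, x) :: nil). split.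
  - constructor; [exact H | constructor].
  - unfold lin_comb; simpl. rewrite ns_scal1. apply ns_add0r.
Qed.

Lemma inspan_lin_comb (S : X -> Prop) (l : list (R * X)) :
  Forall (fun p => inspan S (snd p)) l -> inspan S (lin_comb l).
Proof.
  induction l as [|p l IH]; intros H.
  - apply inspan_0.
  - inversion H; subst. apply inspan_add; [apply inspan_scal |]; auto.
Qed.

Lemma inspan_span (S T : X -> Prop) x :
  (forall v, S v -> inspan T v) -> inspan S x -> inspan T x.
Proof.
  intros HST [l [Hl <-]]. apply inspan_lin_comb.
  eapply Forall_impl; [|exact Hl]. intros p; apply HST.
Qed.

End Spans.

Section Coefficients.
Context {X : NormedSpace}.

Definition coef (v : X) (l : list (R * X)) : R :=
  fold_right (fun p acc => (if dec (snd p = v) then fst p else 0) + acc) 0 l.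

Definition drop_vec (v : X) (l : list (R * X)) : list (R * X) :=
  filter (fun p => if dec (snd p = v) then false else true) l.

Lemma in_drop_vec v l q : In q (drop_vec v l) <-> In q l /\ snd q <> v.
Proof.
  unfold drop_vec. rewrite filter_In.
  destruct (dec (snd q = v)); intuition discriminate.
Qed.

Lemma lin_comb_drop_vec v l :
  lin_comb l = ns_add (lin_comb (drop_vec v l)) (ns_scal (coef v l) v).
Proof.
  induction l as [|p l IH]; simpl.
  - rewrite ns_scal0l. symmetry; apply ns_add0.
  - unfold drop_vec, coef in *. simpl. destruct (dec (snd p = v)) as [e|e].
    + unfold lin_comb at 1. simpl. fold (lin_comb l). rewrite IH.
      rewrite ns_scalDl, e, !ns_addA, (ns_addC X (ns_scal (fst p) v)). reflexivity.
    + rewrite Rplus_0_l. unfold lin_comb; simpl. fold (lin_comb l).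
      fold (lin_comb (filter (fun q : R * X => if dec (snd q = v) then false else true) l)).
      rewrite IH, ns_addA. reflexivity.
Qed.

Lemma coef_drop_vec v w l : w <> v -> coef w (drop_vec v l) = coef w l.
Proof.
  intros Hwv. induction l as [|p l IH]; simpl; auto.
  unfold drop_vec, coef in *; simpl. destruct (dec (snd p = v)) as [e|e]; simpl.
  - destruct (dec (snd p = w)); [congruence | lra].
  - rewrite IH; reflexivity.
Qed.

Lemma coef_notin v l : (forall p, In p l -> snd p <> v) -> coef v l = 0.
Proof.
  induction l as [|p l IH]; simpl; intros H; auto.
  destruct (dec (snd p = v)) as [e|e]; [exfalso; apply (H p); auto|].
  fold (coef v l). rewrite IH; [lra|]. intros q Hq; apply H; auto.
Qed.

Lemma coef_nodup (l : list (R * X)) p :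
  NoDup (map snd l) -> In p l -> coef (snd p) l = fst p.
Proof.
  induction l as [|q l IH]; simpl; intros Hn Hi; [contradiction|].
  inversion Hn as [|? ? Hq Hn']; subst. destruct Hi as [<-|Hi].
  - destruct (dec (snd q = snd q)) as [_|e]; [|congruence].
    fold (coef (snd q) l). rewrite coef_notin; [lra|].
    intros r Hr E. apply Hq. rewrite <- E. apply in_map; auto.
  - destruct (dec (snd q = snd p)) as [e|e].
    + exfalso. apply Hq. rewrite e. apply in_map; auto.
    + fold (coef (snd p) l). rewrite IH; auto. lra.
Qed.

Lemma solve_vanishing_comb (S : X -> Prop) v l :
  lin_comb l = ns_zero -> coef v l <> 0 ->
  (forall q, In q l -> snd q <> v -> S (snd q)) -> inspan S v.
Proof.
  intros Hl Hc HS.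
  assert (Hv : ns_scal (coef v l) v = ns_opp (lin_comb (drop_vec v l))).
  { apply ns_add_eq0. rewrite ns_addC, <- lin_comb_drop_vec. exact Hl. }
  replace v with (ns_scal (-1 / coef v l) (lin_comb (drop_vec v l))).
  2:{ rewrite ns_opp_scal in Hv.
      transitivity (ns_scal (1 / coef v l) (ns_scal (-1) (lin_comb (drop_vec v l)))).
      - rewrite ns_scalA. f_equal. field. exact Hc.
      - rewrite <- Hv, ns_scalA. replace (1 / coef v l * coef v l) with 1 by (field; exact Hc).
        apply ns_scal1. }
  apply inspan_scal, inspan_lin_comb, Forall_forall.
  intros q Hq%in_drop_vec. apply inspan_single, HS; apply Hq.
Qed.

End Coefficients.

(* Greedy extraction of a Hamel basis from a spanning sequence s: keep s n
   exactly when it is not a combination of s 0, ..., s (n-1). *)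
Section GreedyBasis.
Context {X : NormedSpace}.
Variable s : nat -> X.

Definition span_before (n : nat) (x : X) : Prop :=
  inspan (fun v => exists m, (m < n)%nat /\ v = s m) x.

Definition greedy (x : X) : Prop := exists n, x = s n /\ ~ span_before n x.

Definition greedy_index (x : X) : nat :=
  match dec (greedy x) with
  | left H => proj1_sig (constructive_indefinite_description _ H)
  | right _ => 0%nat
  end.

Lemma greedy_index_spec x :
  greedy x -> x = s (greedy_index x) /\ ~ span_before (greedy_index x) x.
Proof.
  intros H. unfold greedy_index. destruct (dec (greedy x)) as [H'|]; [|contradiction].
  destruct (constructive_indefinite_description _ H') as [n Hn]. exact Hn.
Qed.

Lemma greedy_index_inj x y :
  greedy x -> greedy y -> greedy_index x = greedy_index y -> x = y.
Proof.
  intros Hx Hy E. rewrite (proj1 (greedy_index_spec x Hx)), (proj1 (greedy_index_spec y Hy)), E.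
  reflexivity.
Qed.

Let below (N : nat) (p : R * X) : Prop := greedy (snd p) /\ (greedy_index (snd p) < N)%nat.

(* The core of independence, by induction on a bound N of the indices: in a
   vanishing combination the greedy vector of largest index N must have
   coefficient 0, since otherwise it would be a combination of earlier ones. *)
Lemma greedy_coef_vanish N l :
  Forall (below N) l -> lin_comb l = ns_zero -> forall w, coef w l = 0.
Proof.
  revert l; induction N as [|N IH]; intros l Hl E w.
  - destruct l as [|p l]; [reflexivity|]. inversion Hl as [|? ? [_ Hp]]; lia.
  - rewrite Forall_forall in Hl.
    destruct (dec (exists p, In p l /\ greedy_index (snd p) = N)) as [[p [Hp Hi]]|Hno].
    2:{ apply IH; auto. apply Forall_forall. intros q Hq. destruct (Hl q Hq) as [Hg Hlt].
        split; auto. destruct (Nat.eq_dec (greedy_index (snd q)) N); [|lia].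
        exfalso; eauto. }
    set (v := snd p) in *.
    destruct (greedy_index_spec v (proj1 (Hl p Hp))) as [Ev Hnv]. rewrite Hi in Ev, Hnv.
    assert (Hothers : forall q, In q l -> snd q <> v -> below N q).
    { intros q Hq Hqv. destruct (Hl q Hq) as [Hg Hlt]. split; auto.
      destruct (Nat.eq_dec (greedy_index (snd q)) N) as [e|]; [|lia].
      exfalso. apply Hqv. rewrite (proj1 (greedy_index_spec _ Hg)), e. auto. }
    assert (Hcv : coef v l = 0).
    { destruct (Req_dec_T (coef v l) 0) as [|Hc]; auto. exfalso. apply Hnv.
      apply (solve_vanishing_comb _ v l E Hc). intros q Hq Hqv.
      destruct (Hothers q Hq Hqv) as [Hg Hlt].
      exists (greedy_index (snd q)). split; auto. apply greedy_index_spec, Hg. }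
    destruct (dec (w = v)) as [->|Hwv]; auto.
    rewrite <- (coef_drop_vec v w l Hwv). apply IH.
    + apply Forall_forall. intros q [Hq Hqv]%in_drop_vec. auto.
    + rewrite (lin_comb_drop_vec v), Hcv, ns_scal0l, ns_add0r in E. exact E.
Qed.

Lemma greedy_independent : lin_independent greedy.
Proof.
  intros l Hnd Hg E.
  assert (HN : exists N, Forall (below N) l).
  { clear Hnd E. induction l as [|p l IH].
    - exists 0%nat; constructor.
    - inversion Hg as [|? ? Hp Hl]; subst. destruct (IH Hl) as [N HN].
      exists (S (Nat.max N (greedy_index (snd p)))). constructor.
      + split; auto. lia.
      + eapply Forall_impl; [|exact HN]. intros q [h1 h2]. split; auto; lia. }
  destruct HN as [N HN]. apply Forall_forall. intros p Hp.
  rewrite <- (coef_nodup l p); auto. apply (greedy_coef_vanish N l HN E).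
Qed.

Lemma greedy_spans_sequence n : inspan greedy (s n).
Proof.
  induction n as [n IH] using (well_founded_induction Wf_nat.lt_wf).
  destruct (dec (span_before n (s n))) as [Hsp|Hsp].
  - apply (inspan_span _ greedy _) in Hsp; [exact Hsp|].
    intros v [m [Hm ->]]. exact (IH m Hm).
  - apply inspan_single. exists n; auto.
Qed.

Lemma countable_hamel_dim_of_spanning_seq :
  (forall x, inspan (fun v => exists m, v = s m) x) -> countable_hamel_dim X.
Proof.
  intros Hs. exists greedy. split; [split|].
  - apply greedy_independent.
  - intros x. apply (inspan_span (fun v => exists m, v = s m)); [|apply Hs].
    intros v [m ->]. apply greedy_spans_sequence.
  - exists greedy_index. apply greedy_index_inj.
Qed.

End GreedyBasis.

Definition lsum {T A : Type} (op : A -> A -> A) (e : A) (g : T -> A) (l : list T) : A :=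
  fold_right (fun x acc => op (g x) acc) e l.

Section ListSums.
Context {T A : Type}.
Variables (op : A -> A -> A) (e : A).
Hypothesis opA : forall a b c, op a (op b c) = op (op a b) c.
Hypothesis opC : forall a b, op a b = op b a.
Hypothesis op0 : forall a, op e a = a.

Lemma lsum_perm (g : T -> A) l1 l2 : Permutation l1 l2 -> lsum op e g l1 = lsum op e g l2.
Proof.
  induction 1; simpl; auto.
  - rewrite IHPermutation; reflexivity.
  - rewrite !opA, (opC (g y)). reflexivity.
  - congruence.
Qed.

Lemma lsum_filter (f : T -> R) (g : T -> A) (Hg : forall x, f x = 0 -> g x = e) l :
  lsum op e g l = lsum op e g (filter (fun x => if dec (f x = 0) then false else true) l).
Proof.
  induction l as [|x l IH]; simpl; auto.
  destruct (dec (f x = 0)) as [h|h]; simpl.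
  - rewrite Hg, op0; auto.
  - rewrite IH; reflexivity.
Qed.

Lemma lsum_support_indep (f : T -> R) (g : T -> A) (Hg : forall x, f x = 0 -> g x = e) l1 l2 :
  NoDup l1 -> NoDup l2 ->
  (forall x, f x <> 0 -> In x l1) -> (forall x, f x <> 0 -> In x l2) ->
  lsum op e g l1 = lsum op e g l2.
Proof.
  intros N1 N2 C1 C2. rewrite (lsum_filter f g Hg l1), (lsum_filter f g Hg l2).
  apply lsum_perm, NoDup_Permutation; try apply NoDup_filter; auto.
  intros x. rewrite !filter_In. destruct (dec (f x = 0)).
  - split; intros [_ H]; discriminate.
  - split; intros [_ H]; split; auto.
Qed.

Lemma lsum_op (g h : T -> A) l :
  lsum op e (fun x => op (g x) (h x)) l = op (lsum op e g l) (lsum op e h l).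
Proof.
  induction l as [|x l IH]; simpl; auto.
  rewrite IH, !opA. f_equal. rewrite <- !opA. f_equal. apply opC.
Qed.

End ListSums.

Section RealSums.
Context {T : Type}.

Lemma lsum_le (g h : T -> R) l :
  (forall x, g x <= h x) -> lsum Rplus 0 g l <= lsum Rplus 0 h l.
Proof. intros H. induction l as [|x l IH]; simpl; [lra|]. specialize (H x). lra. Qed.

Lemma lsum_ge0 (g : T -> R) l : (forall x, 0 <= g x) -> 0 <= lsum Rplus 0 g l.
Proof. intros H. induction l as [|x l IH]; simpl; [lra|]. specialize (H x). lra. Qed.

Lemma lsum_term (g : T -> R) l x :
  (forall x, 0 <= g x) -> In x l -> g x <= lsum Rplus 0 g l.
Proof.
  intros H. induction l as [|y l IH]; simpl; [tauto|]. intros [<-|Hi].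
  - pose proof (lsum_ge0 g l H). lra.
  - specialize (IH Hi). specialize (H y). lra.
Qed.

Lemma lsum_mul (a : R) (g : T -> R) l :
  lsum Rplus 0 (fun x => a * g x) l = a * lsum Rplus 0 g l.
Proof. induction l as [|x l IH]; simpl; [ring|]. rewrite IH. ring. Qed.

End RealSums.

Lemma lsum_scal {X : NormedSpace} {T : Type} (a : R) (g : T -> X) l :
  lsum ns_add ns_zero (fun x => ns_scal a (g x)) l = ns_scal a (lsum ns_add ns_zero g l).
Proof.
  induction l as [|x l IH]; simpl.
  - symmetry; apply ns_scal0r.
  - rewrite IH, ns_scalDr. reflexivity.
Qed.


Section WeightedL1.
Variable P : NormedSpace.

Definition finitely_supported (f : P -> R) : Prop :=
  exists l : list P, forall x, f x <> 0 -> In x l.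

Definition fin_fun : Type := {f : P -> R | finitely_supported f}.

Definition ff_val (f : fin_fun) : P -> R := proj1_sig f.
Coercion ff_val : fin_fun >-> Funclass.

(* A chosen duplicate-free enumeration of a superset of the support. *)
Definition support (f : fin_fun) : list P :=
  nodup (fun x y => dec (x = y))
        (proj1_sig (constructive_indefinite_description _ (proj2_sig f))).

Lemma support_nodup (f : fin_fun) : NoDup (support f).
Proof. apply NoDup_nodup. Qed.

Lemma support_cover (f : fin_fun) x : f x <> 0 -> In x (support f).
Proof.
  intros H. unfold support. apply nodup_In.
  destruct (constructive_indefinite_description _ (proj2_sig f)) as [l Hl]. auto.
Qed.

Lemma fin_fun_ext (f g : fin_fun) : (forall x, f x = g x) -> f = g.
Proof.
  intros H. apply eq_sig_hprop; [intros; apply proof_irrelevance|].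
  apply functional_extensionality. exact H.
Qed.

Lemma common_support (f g : fin_fun) :
  exists l, NoDup l /\ (forall x, f x <> 0 -> In x l) /\ (forall x, g x <> 0 -> In x l).
Proof.
  exists (nodup (fun x y => dec (x = y)) (support f ++ support g)).
  split; [apply NoDup_nodup|].
  split; intros x h; apply nodup_In, in_or_app; [left | right]; apply support_cover; auto.
Qed.

Definition ff_zero : fin_fun.
Proof. exists (fun _ => 0). exists nil. intros x h; exfalso; apply h; reflexivity. Defined.

Definition ff_add (f g : fin_fun) : fin_fun.
Proof.
  exists (fun x => f x + g x).
  destruct (common_support f g) as [l [_ [Hf Hg]]]. exists l. intros x h.
  destruct (Req_dec_T (f x) 0) as [e|e]; [apply Hg; lra | auto].
Defined.

Definition ff_scal (a : R) (f : fin_fun) : fin_fun.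
Proof.
  exists (fun x => a * f x).
  exists (support f). intros x h. apply support_cover.
  intros e; apply h; rewrite e; ring.
Defined.

(* The weight is positive even at 0, which makes the norm definite. *)
Definition weight (x : P) : R := ns_norm x + 1.

Lemma weight_pos (x : P) : 0 < weight x.
Proof. unfold weight. pose proof (ns_norm_ge0 x). lra. Qed.

Definition l1_norm (f : fin_fun) : R :=
  lsum Rplus 0 (fun x => Rabs (f x) * weight x) (support f).

Lemma l1_norm_on (f : fin_fun) l :
  NoDup l -> (forall x, f x <> 0 -> In x l) ->
  l1_norm f = lsum Rplus 0 (fun x => Rabs (f x) * weight x) l.
Proof.
  intros N C. apply (lsum_support_indep Rplus 0 (fun a b c => eq_sym (Rplus_assoc a b c))
                       Rplus_comm Rplus_0_l f); auto.
  - intros x ->. rewrite Rabs_R0. ring.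
  - apply support_nodup.
  - apply support_cover.
Qed.

Lemma coordinate_bound (f : fin_fun) x : Rabs (f x) * weight x <= l1_norm f.
Proof.
  assert (Hnn : forall y, 0 <= Rabs (f y) * weight y).
  { intros y. apply Rmult_le_pos; [apply Rabs_pos | left; apply weight_pos]. }
  destruct (Req_dec_T (f x) 0) as [e|e].
  - rewrite e, Rabs_R0, Rmult_0_l. apply lsum_ge0, Hnn.
  - apply (lsum_term (fun x => Rabs (f x) * weight x)); [exact Hnn | apply support_cover, e].
Qed.

Lemma l1_norm_eq0 (f : fin_fun) : l1_norm f = 0 -> f = ff_zero.
Proof.
  intros H. apply fin_fun_ext. intros x. simpl.
  destruct (Req_dec_T (f x) 0) as [e|e]; auto. exfalso.
  pose proof (coordinate_bound f x). pose proof (Rabs_pos_lt _ e). pose proof (weight_pos x).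
  assert (0 < Rabs (f x) * weight x) by (apply Rmult_lt_0_compat; auto). lra.
Qed.

Lemma l1_norm_scal a (f : fin_fun) : l1_norm (ff_scal a f) = Rabs a * l1_norm f.
Proof.
  rewrite (l1_norm_on (ff_scal a f) (support f)).
  - unfold l1_norm. rewrite <- lsum_mul. f_equal. apply functional_extensionality.
    intros x; simpl. rewrite Rabs_mult; ring.
  - apply support_nodup.
  - intros x h. apply support_cover. simpl in h. intros e; apply h; rewrite e; ring.
Qed.

Lemma l1_norm_triangle (f g : fin_fun) : l1_norm (ff_add f g) <= l1_norm f + l1_norm g.
Proof.
  destruct (common_support f g) as [l [N [Cf Cg]]].
  assert (Cfg : forall x, ff_add f g x <> 0 -> In x l).
  { intros x h. simpl in h. destruct (Req_dec_T (f x) 0); [apply Cg; lra | auto]. }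
  rewrite (l1_norm_on _ l N Cfg), (l1_norm_on f l N Cf), (l1_norm_on g l N Cg).
  rewrite <- (lsum_op Rplus 0 (fun a b c => eq_sym (Rplus_assoc a b c)) Rplus_comm Rplus_0_l).
  apply lsum_le. intros x. simpl. pose proof (weight_pos x).
  pose proof (Rabs_triang (f x) (g x)). nra.
Qed.

Definition l1_space : NormedSpace.
Proof.
  refine {| ns_car := fin_fun; ns_zero := ff_zero; ns_add := ff_add;
            ns_opp := ff_scal (-1); ns_scal := ff_scal; ns_norm := l1_norm |};
    try (intros; apply fin_fun_ext; intros; simpl; ring).
  - apply l1_norm_eq0.
  - apply l1_norm_scal.
  - apply l1_norm_triangle.
Defined.

End WeightedL1.

Section SummationMap.
Variable P : NormedSpace.

Definition sum_map (f : fin_fun P) : P :=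
  lsum ns_add ns_zero (fun x => ns_scal (f x) x) (support P f).

Lemma sum_map_on (f : fin_fun P) l :
  NoDup l -> (forall x, f x <> 0 -> In x l) ->
  sum_map f = lsum ns_add ns_zero (fun x => ns_scal (f x) x) l.
Proof.
  intros N C. apply (lsum_support_indep ns_add ns_zero (ns_addA P) (ns_addC P) (ns_add0 P) f); auto.
  - intros x ->. apply ns_scal0l.
  - apply support_nodup.
  - apply support_cover.
Qed.

(* The summation map is linear and has norm at most 1, since ||x|| <= weight x. *)
Lemma sum_map_linear : @linear_map (l1_space P) P sum_map.
Proof.
  split.
  - intros f g; simpl in f, g. destruct (common_support P f g) as [l [N [Cf Cg]]].
    assert (Cfg : forall x, ff_add P f g x <> 0 -> In x l).
    { intros x h. simpl in h. destruct (Req_dec_T (f x) 0); [apply Cg; lra | auto]. }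
    simpl. rewrite (sum_map_on _ l N Cfg), (sum_map_on f l N Cf), (sum_map_on g l N Cg).
    rewrite <- (lsum_op ns_add ns_zero (ns_addA P) (ns_addC P) (ns_add0 P)).
    f_equal. apply functional_extensionality. intros x. apply ns_scalDl.
  - intros a f; simpl in f |- *. rewrite (sum_map_on (ff_scal P a f) (support P f)).
    + unfold sum_map. rewrite <- lsum_scal. f_equal. apply functional_extensionality.
      intros x. simpl. rewrite ns_scalA. reflexivity.
    + apply support_nodup.
    + intros x h. apply support_cover. simpl in h. intros e; apply h; rewrite e; ring.
Qed.

Lemma sum_map_norm_le (f : fin_fun P) : ns_norm (sum_map f) <= l1_norm P f.
Proof.
  unfold sum_map, l1_norm. induction (support P f) as [|x l IH]; simpl.
  - rewrite ns_norm0; lra.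
  - eapply Rle_trans; [apply ns_normD|]. rewrite ns_normZ.
    assert (Rabs (f x) * ns_norm x <= Rabs (f x) * weight P x).
    { apply Rmult_le_compat_l; [apply Rabs_pos|]. unfold weight; lra. }
    lra.
Qed.

(* x is the image of c times the indicator of x / c, whose norm is ||x|| + c. *)
Lemma sum_map_coisometric : @coisometric (l1_space P) P sum_map.
Proof.
  split; [|split].
  - split; [apply sum_map_linear|]. exists 1. intros f. rewrite Rmult_1_l. apply sum_map_norm_le.
  - intros f. apply (sum_map_norm_le f).
  - intros x eps He. set (c := eps / 2). assert (Hc : 0 < c) by (unfold c; lra).
    set (y := ns_scal (1 / c) x).
    assert (Hy : finitely_supported P (fun z => if dec (z = y) then c else 0)).
    { exists (y :: nil). intros z h. destruct (dec (z = y)) as [e|e]; [left; auto|].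
      exfalso; apply h; reflexivity. }
    set (f := exist _ _ Hy : fin_fun P). exists f.
    assert (N : NoDup (y :: nil)) by (constructor; [intros []|constructor]).
    assert (Cv : forall z, f z <> 0 -> In z (y :: nil)).
    { intros z h. simpl in h. destruct (dec (z = y)) as [e|e]; [left; auto|].
      exfalso; apply h; reflexivity. }
    assert (Hfy : f y = c) by (simpl; destruct (dec (y = y)); congruence).
    split.
    + rewrite (sum_map_on f _ N Cv). cbn [lsum fold_right]. rewrite Hfy, ns_add0r. unfold y.
      rewrite ns_scalA. replace (c * (1 / c)) with 1 by (field; lra). apply ns_scal1.
    + change (l1_norm P f < ns_norm x + eps).
      rewrite (l1_norm_on P f _ N Cv). cbn [lsum fold_right]. rewrite Hfy.
      assert (0 < 1 / c) by (apply Rdiv_lt_0_compat; lra).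
      unfold weight, y. rewrite ns_normZ, !Rabs_right by lra.
      replace (c * (1 / c * ns_norm x + 1) + 0) with (ns_norm x + c) by (field; lra).
      unfold c; lra.
Qed.

Lemma sum_map_in_span (f : fin_fun P) : inspan (fun x => f x <> 0) (sum_map f).
Proof.
  unfold sum_map. induction (support P f) as [|x l IH]; simpl.
  - apply inspan_0.
  - apply inspan_add; [|exact IH].
    destruct (Req_dec_T (f x) 0) as [e|e].
    + rewrite e, ns_scal0l. apply inspan_0.
    + apply inspan_scal, inspan_single, e.
Qed.

End SummationMap.

Lemma enumerate_supports (P : NormedSpace) (u : nat -> fin_fun P) :
  exists s : nat -> P, forall n g, u n g <> 0 -> exists m, g = s m.
Proof.
  exists (fun m => let (n, k) := of_nat m in nth k (support P (u n)) ns_zero).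
  intros n g Hg. destruct (In_nth _ _ ns_zero (support_cover P (u n) g Hg)) as [k [_ Hk]].
  exists (to_nat (n, k)). rewrite cancel_of_to. symmetry; exact Hk.
Qed.

(* For bounded psi : X -> l1^0(P) and d dense in X, every point in the
   support of some psi x lies in the support of some psi (d n): otherwise the
   coordinate of psi (x - d n) at that point would be psi x g for every n,
   although the coordinate functional is bounded and x - d n can be small. *)
Lemma support_within_dense_supports (X P : NormedSpace) (psi : X -> fin_fun P)
  (d : nat -> X) :
  @bounded_operator X (l1_space P) psi ->
  (forall x eps, 0 < eps -> exists n, ns_norm (ns_sub x (d n)) < eps) ->
  forall x g, psi x g <> 0 -> exists n, psi (d n) g <> 0.
Proof.
  intros [[Hadd Hscal] [C HC]] Hd x g Hg.
  apply NNPP. intros Hnone.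
  set (a := Rabs (psi x g) * weight P g).
  assert (Ha : 0 < a) by (apply Rmult_lt_0_compat; [apply Rabs_pos_lt | apply weight_pos]; auto).
  set (C' := Rmax C 1).
  assert (HC' : 0 < C') by (pose proof (Rmax_r C 1); unfold C'; lra).
  destruct (Hd x (a / (2 * C'))) as [n Hn]; [apply Rdiv_lt_0_compat; lra|].
  assert (Hcoord : psi (ns_sub x (d n)) g = psi x g).
  { unfold ns_sub. rewrite Hadd, ns_opp_scal, Hscal. simpl.
    assert (psi (d n) g = 0) by (apply NNPP; eauto). lra. }
  pose proof (coordinate_bound P (psi (ns_sub x (d n))) g) as Hb.
  rewrite Hcoord in Hb. fold a in Hb.
  pose proof (HC (ns_sub x (d n))) as Hbound.
  pose proof (ns_norm_ge0 (ns_sub x (d n))).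
  assert (C * ns_norm (ns_sub x (d n)) <= C' * ns_norm (ns_sub x (d n)))
    by (apply Rmult_le_compat_r; [auto | apply Rmax_l]).
  assert (C' * ns_norm (ns_sub x (d n)) < C' * (a / (2 * C')))
    by (apply Rmult_lt_compat_l; auto).
  replace (C' * (a / (2 * C'))) with (a / 2) in * by (field; lra).
  simpl in Hbound. lra.
Qed.

Theorem proposition2p4 (P : NormedSpace) :
  separable P -> topologically_projective P -> countable_hamel_dim P.
Proof.
  intros [d Hd] Hproj.
  assert (Hid : bounded_operator (fun x : P => x)).
  { split; [split; reflexivity|]. exists 1. intros; lra. }
  destruct (Hproj (l1_space P) P (sum_map P) (fun x => x) (sum_map_coisometric P) Hid)
    as [psi [Hpsi_bd Hpsi]].
  change (P -> fin_fun P) in psi.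
  destruct (enumerate_supports P (fun n => psi (d n))) as [s Hs].
  apply (countable_hamel_dim_of_spanning_seq s). intros x.
  rewrite <- (Hpsi x). apply (inspan_span (fun g => psi x g <> 0)); [|apply sum_map_in_span].
  intros g Hg. apply inspan_single.
  destruct (support_within_dense_supports P P psi d Hpsi_bd Hd x g Hg) as [n Hn].
  exact (Hs n g Hn).
Qed.
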